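(* Let $\mathcal{T}=\mathcal{X}=\mathcal{Y}=\{0,1\}$ and $P\in\Delta_{\mathcal{T},\mathcal{X},\mathcal{Y}}$ with $P(T=0)>0$, $P(T=1)>0$. Assume that if condition (c) or (d) holds then condition (a) or (b) holds, where: (a) $H_P(X\mid T)=0$; (b) $H_P(Y\mid T)=0$; (c) $H_P(X\mid T=0)=0$ and $H_P(Y\mid T=1)=0$; (d) $H_P(X\mid T=1)=0$ and $H_P(Y\mid T=0)=0$. If $\tilde Q\in\arg\max_{Q\in\Delta_P}H_Q(T\mid X,Y)$ lies in the relative interior of $\Delta_P$, then under $\tilde Q$, $T$ is conditionally independent of $X$ given $Y$, or $T$ is conditionally independent of $Y$ given $X$.
   Context: $\Delta_{\mathcal{T},\mathcal{X},\mathcal{Y}}$ is the set of all joint distributions of $(T,X,Y)$. For $P$, $\Delta_P=\{Q\in\Delta_{\mathcal{T},\mathcal{X},\mathcal{Y}}: Q(X=x,T=t)=P(X=x,T=t),\ Q(Y=y,T=t)=P(Y=y,T=t)\ \forall x,y,t\}$. $H_P(X\mid T=t)$ is the entropy of the conditional distribution of $X$ given $T=t$. Conditions (a)–(d) are exactly the cases in which $\Delta_P$ is a single point. *)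

From Stdlib Require Import Reals List.
Open Scope R_scope.

(* A joint distribution of (T,X,Y) on {0,1}^3 is a function T -> X -> Y -> R. *)
Definition jdist := bool -> bool -> bool -> R.

Definition sumb (f : bool -> R) : R := f false + f true.

Definition is_dist (Q : jdist) : Prop :=
  (forall t x y, 0 <= Q t x y) /\
  sumb (fun t => sumb (fun x => sumb (fun y => Q t x y))) = 1.

Definition pT  (Q : jdist) t := sumb (fun x => sumb (fun y => Q t x y)).
Definition pTX (Q : jdist) t x := sumb (fun y => Q t x y).
Definition pTY (Q : jdist) t y := sumb (fun x => Q t x y).
Definition pXY (Q : jdist) x y := sumb (fun t => Q t x y).
Definition pX  (Q : jdist) x := sumb (fun t => sumb (fun y => Q t x y)).
Definition pY  (Q : jdist) y := sumb (fun t => sumb (fun x => Q t x y)).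

Definition DeltaP (P Q : jdist) : Prop :=
  is_dist Q /\
  (forall t x, pTX Q t x = pTX P t x) /\
  (forall t y, pTY Q t y = pTY P t y).

(* p log p with the convention 0 log 0 = 0 (natural log; base irrelevant) *)
Definition plogp (p : R) : R := if Rlt_dec 0 p then p * ln p else 0.

Definition ent2 (f : bool -> R) : R := - sumb (fun b => plogp (f b)).

Definition H_X_given_Tt (P : jdist) t := ent2 (fun x => pTX P t x / pT P t).
Definition H_Y_given_Tt (P : jdist) t := ent2 (fun y => pTY P t y / pT P t).

Definition H_X_given_T (P : jdist) := sumb (fun t => pT P t * H_X_given_Tt P t).
Definition H_Y_given_T (P : jdist) := sumb (fun t => pT P t * H_Y_given_Tt P t).

Definition H_T_given_XY (Q : jdist) : R :=
  - sumb (fun t => sumb (fun x => sumb (fun y =>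
      if Rlt_dec 0 (Q t x y) then Q t x y * ln (Q t x y / pXY Q x y) else 0))).

Definition affcomb (l : list (R * jdist)) : jdist :=
  fun t x y => fold_right (fun cq acc => fst cq * snd cq t x y + acc) 0 l.

Definition aff_hull (S : jdist -> Prop) (Q : jdist) : Prop :=
  exists l : list (R * jdist),
    Forall (fun cq => S (snd cq)) l /\
    fold_right (fun cq acc => fst cq + acc) 0 l = 1 /\
    Q = affcomb l.

(* Relative interior (topology of R^8 via the max-norm) *)
Definition rel_interior (S : jdist -> Prop) (Q : jdist) : Prop :=
  S Q /\
  exists eps, 0 < eps /\
    forall Q', aff_hull S Q' ->
      (forall t x y, Rabs (Q' t x y - Q t x y) < eps) -> S Q'.

Definition is_argmax_HTXY (P Qt : jdist) : Prop :=
  DeltaP P Qt /\ forall Q, DeltaP P Q -> H_T_given_XY Q <= H_T_given_XY Qt.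

Definition CI_T_X_given_Y (Q : jdist) : Prop :=
  forall t x y, Q t x y * pY Q y = pTY Q t y * pXY Q x y.
Definition CI_T_Y_given_X (Q : jdist) : Prop :=
  forall t x y, Q t x y * pX Q x = pTX Q t x * pXY Q x y.

From Stdlib Require Import Reals List Lra Psatz FunctionalExtensionality.
From Coquelicot Require Import Coquelicot.
Open Scope R_scope.

(* In the relative interior of Delta_P every slice T = t can be moved both ways along the
   checkerboard direction (+1,-1,-1,+1) in (X,Y), which preserves both constrained marginals.
   Hence a zero entry forces a whole zero row or column in its slice (X or Y is deterministic
   given T = t), and on a strictly positive slice the derivative of H(T|X,Y) along this
   direction vanishes at the maximiser: the odds ratio of the slice equals that of the
   (X,Y)-marginal.  Elementary algebra on the eight entries then gives proportional rows in
   both slices (T indep. of Y given X) or proportional columns (T indep. of X given Y).  The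
   hypothesis on (a)-(d) excludes the one configuration where this fails: a zero row in one
   slice and a zero column in the other. *)

Definition sign_eqb (b b' : bool) : R := if Bool.eqb b b' then 1 else -1.

Lemma Rabs_sign_eqb b b' : Rabs (sign_eqb b b') = 1.
Proof.
  unfold sign_eqb. destruct (Bool.eqb b b').
  - apply Rabs_R1.
  - rewrite Rabs_left; lra.
Qed.

(* The checkerboard pattern [sign_eqb x x' * sign_eqb y y'] has zero row and column
   sums, so moving slice [t] along it preserves the (T,X) and (T,Y) marginals. *)
Definition checker_shift (Q : jdist) (t x y : bool) (s : R) : jdist :=
  fun t' x' y' =>
    Q t' x' y' + (if Bool.eqb t' t then s * (sign_eqb x x' * sign_eqb y y') else 0).

Lemma checker_shift_same Q t x y s x' y' :
  checker_shift Q t x y s t x' y' = Q t x' y' + s * (sign_eqb x x' * sign_eqb y y').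
Proof. unfold checker_shift. now rewrite Bool.eqb_reflx. Qed.

Lemma checker_shift_other Q t x y s x' y' :
  checker_shift Q t x y s (negb t) x' y' = Q (negb t) x' y'.
Proof. unfold checker_shift. destruct t; simpl; ring. Qed.

Lemma checker_shift_0 Q t x y : checker_shift Q t x y 0 = Q.
Proof.
  extensionality t'; extensionality x'; extensionality y'.
  unfold checker_shift. destruct (Bool.eqb t' t); ring.
Qed.

Lemma DeltaP_checker_shift P Q t x y s :
  DeltaP P Q ->
  (forall x' y', 0 <= Q t x' y' + s * (sign_eqb x x' * sign_eqb y y')) ->
  DeltaP P (checker_shift Q t x y s).
Proof.
  intros [[Hnn Hsum] [HX HY]] Hslice.
  unfold DeltaP, is_dist, pTX, pTY, checker_shift, sumb in *.
  split; [split | split].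
  - intros t' x' y'. destruct (Bool.eqb t' t) eqn:E.
    + apply Bool.eqb_prop in E; subst t'. apply Hslice.
    + specialize (Hnn t' x' y'); lra.
  - rewrite <- Hsum. destruct t, x, y; unfold sign_eqb; simpl; lra.
  - intros t' x'; rewrite <- HX. destruct t, x, y, t', x'; unfold sign_eqb; simpl; lra.
  - intros t' y'; rewrite <- HY. destruct t, x, y, t', y'; unfold sign_eqb; simpl; lra.
Qed.

Lemma aff_hull_checker_shift (S : jdist -> Prop) Q t x y d s :
  S Q -> S (checker_shift Q t x y d) -> d <> 0 -> aff_hull S (checker_shift Q t x y s).
Proof.
  intros HQ Hd Hd0.
  exists ((1 - s / d, Q) :: (s / d, checker_shift Q t x y d) :: nil).
  split; [| split].
  - repeat constructor; assumption.
  - simpl. field. exact Hd0.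
  - extensionality t'; extensionality x'; extensionality y'.
    unfold affcomb, checker_shift; simpl. destruct (Bool.eqb t' t); field; exact Hd0.
Qed.

Lemma checker_shift_dist Q t x y s t' x' y' :
  Rabs (checker_shift Q t x y s t' x' y' - Q t' x' y') <= Rabs s.
Proof.
  unfold checker_shift. destruct (Bool.eqb t' t).
  - replace (Q t' x' y' + s * (sign_eqb x x' * sign_eqb y y') - Q t' x' y')
      with (s * (sign_eqb x x' * sign_eqb y y')) by ring.
    rewrite !Rabs_mult, !Rabs_sign_eqb. lra.
  - replace (Q t' x' y' + 0 - Q t' x' y') with 0 by ring.
    rewrite Rabs_R0. apply Rabs_pos.
Qed.

Lemma rel_interior_zero_pattern P Q t x y :
  rel_interior (DeltaP P) Q ->
  Q t x y = 0 -> Q t x (negb y) = 0 \/ Q t (negb x) y = 0.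
Proof.
  intros [HD [eps [Heps Hnear]]] H0.
  assert (Hnn : forall t x y, 0 <= Q t x y) by apply HD.
  destruct (Req_dec (Q t x (negb y)) 0) as [E1 | E1]; [now left |].
  destruct (Req_dec (Q t (negb x) y) 0) as [E2 | E2]; [now right |].
  exfalso.
  pose proof (Hnn t x (negb y)); pose proof (Hnn t (negb x) y).
  set (d := Rmin (Q t x (negb y)) (Q t (negb x) y)).
  assert (Hd : 0 < d) by (apply Rmin_pos; lra).
  assert (Hd1 : d <= Q t x (negb y)) by apply Rmin_l.
  assert (Hd2 : d <= Q t (negb x) y) by apply Rmin_r.
  assert (HDd : DeltaP P (checker_shift Q t x y d)).
  { apply DeltaP_checker_shift; [exact HD |]. intros x' y'.
    pose proof (Hnn t x' y').
    destruct x, y, x', y'; unfold sign_eqb in *; simpl in *; lra. }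
  (* the entry (x,y) is zero, so a step in the opposite direction leaves Delta_P *)
  set (s := - Rmin eps d / 2).
  assert (Hm : 0 < Rmin eps d) by (apply Rmin_pos; lra).
  assert (Hm1 : Rmin eps d <= eps) by apply Rmin_l.
  assert (HDs : DeltaP P (checker_shift Q t x y s)).
  { apply Hnear.
    - apply aff_hull_checker_shift with d; [exact HD | exact HDd | lra].
    - intros t' x' y'. eapply Rle_lt_trans; [apply checker_shift_dist |].
      unfold s. rewrite Rabs_left; lra. }
  destruct HDs as [[Hnn' _] _]. specialize (Hnn' t x y).
  rewrite checker_shift_same, H0 in Hnn'. unfold sign_eqb in Hnn'.
  rewrite !Bool.eqb_reflx in Hnn'. unfold s in Hnn'. lra.
Qed.

Definition all_pos (a b c d : R) : Prop := 0 < a /\ 0 < b /\ 0 < c /\ 0 < d.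
Definition row_zero (a b c d : R) : Prop := (a = 0 /\ b = 0) \/ (c = 0 /\ d = 0).
Definition col_zero (a b c d : R) : Prop := row_zero a c b d.

Definition at_slice (F : R -> R -> R -> R -> Prop) (Q : jdist) (t : bool) : Prop :=
  F (Q t false false) (Q t false true) (Q t true false) (Q t true true).

Lemma slice_trichotomy a b c d :
  0 <= a -> 0 <= b -> 0 <= c -> 0 <= d ->
  (a = 0 -> b = 0 \/ c = 0) -> (b = 0 -> a = 0 \/ d = 0) ->
  (c = 0 -> d = 0 \/ a = 0) -> (d = 0 -> c = 0 \/ b = 0) ->
  all_pos a b c d \/ row_zero a b c d \/ col_zero a b c d.
Proof.
  unfold all_pos, col_zero, row_zero.
  intros Ha Hb Hc Hd Za Zb Zc Zd.
  destruct (Req_dec a 0) as [Ea | Ea]; [destruct (Za Ea); tauto |].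
  destruct (Req_dec b 0) as [Eb | Eb]; [destruct (Zb Eb); tauto |].
  destruct (Req_dec c 0) as [Ec | Ec]; [destruct (Zc Ec); tauto |].
  destruct (Req_dec d 0) as [Ed | Ed]; [destruct (Zd Ed); tauto |].
  left. repeat split; lra.
Qed.

Lemma rel_interior_slice_shape P Q t :
  rel_interior (DeltaP P) Q ->
  at_slice all_pos Q t \/ at_slice row_zero Q t \/ at_slice col_zero Q t.
Proof.
  intros Hri.
  assert (Hnn : forall x y, 0 <= Q t x y) by (intros; apply Hri).
  apply slice_trichotomy; try apply Hnn; intro Hz;
    apply (rel_interior_zero_pattern P Q t _ _ Hri Hz).
Qed.

Definition ent_term (q p : R) : R := if Rlt_dec 0 q then q * ln (q / p) else 0.

Definition cell_ent (a c : R) : R := ent_term a (a + c) + ent_term c (a + c).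

Lemma cell_ent_comm a c : cell_ent a c = cell_ent c a.
Proof. unfold cell_ent. rewrite (Rplus_comm c a). ring. Qed.

Lemma H_T_given_XY_cells Q t :
  H_T_given_XY Q = - sumb (fun x => sumb (fun y => cell_ent (Q t x y) (Q (negb t) x y))).
Proof.
  assert (Hfalse : H_T_given_XY Q =
            - sumb (fun x => sumb (fun y => cell_ent (Q false x y) (Q true x y)))).
  { unfold H_T_given_XY, cell_ent, ent_term, pXY, sumb. ring. }
  rewrite Hfalse. destruct t; [| reflexivity].
  unfold sumb; simpl.
  rewrite (cell_ent_comm (Q true false false)), (cell_ent_comm (Q true false true)),
    (cell_ent_comm (Q true true false)), (cell_ent_comm (Q true true true)).
  reflexivity.
Qed.

Lemma locally_pos_affine a k : 0 < a -> locally 0 (fun s => 0 < a + s * k).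
Proof.
  intros Ha.
  assert (Heps : 0 < a / (Rabs k + 1)).
  { apply Rdiv_lt_0_compat; [exact Ha | pose proof (Rabs_pos k); lra]. }
  exists (mkposreal _ Heps). intros s Hs.
  change (Rabs (s - 0) < a / (Rabs k + 1)) in Hs. rewrite Rminus_0_r in Hs.
  assert (Hsk : Rabs (s * k) < a).
  { rewrite Rabs_mult. pose proof (Rabs_pos s); pose proof (Rabs_pos k).
    apply Rmult_lt_compat_r with (r := Rabs k + 1) in Hs; [| lra].
    unfold Rdiv in Hs. rewrite Rmult_assoc, Rinv_l in Hs by lra. nra. }
  apply Rabs_def2 in Hsk. lra.
Qed.

Lemma cell_ent_derive a c k :
  0 < a -> 0 <= c ->
  is_derive (fun s => cell_ent (a + s * k) c) 0 (k * ln (a / (a + c))).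
Proof.
  intros Ha Hc.
  apply is_derive_ext_loc with
    (fun s => (a + s * k) * ln ((a + s * k) / (a + s * k + c)) + ent_term c (a + s * k + c)).
  { apply filter_imp with (2 := locally_pos_affine a k Ha). intros s Hs.
    unfold cell_ent. f_equal. unfold ent_term.
    destruct (Rlt_dec 0 (a + s * k)); [reflexivity | lra]. }
  unfold ent_term. destruct (Rlt_dec 0 c) as [Hc' | Hc'];
    [| replace c with 0 in * by lra]; auto_derive; rewrite ?Rmult_0_l, ?Rplus_0_r.
  all: try (repeat split; try lra; apply Rdiv_lt_0_compat; lra).
  all: unfold Rdiv; simpl; field; lra.
Qed.

Lemma H_checker_shift_derive Q t x0 y0 :
  (forall x y, 0 < Q t x y) -> (forall x y, 0 <= Q (negb t) x y) ->
  is_derive (fun s => H_T_given_XY (checker_shift Q t x0 y0 s)) 0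
    (- sumb (fun x => sumb (fun y =>
         sign_eqb x0 x * sign_eqb y0 y * ln (Q t x y / (Q t x y + Q (negb t) x y))))).
Proof.
  intros Hpos Hnn.
  apply is_derive_ext with (fun s => - sumb (fun x => sumb (fun y =>
    cell_ent (Q t x y + s * (sign_eqb x0 x * sign_eqb y0 y)) (Q (negb t) x y)))).
  { intro s. rewrite (H_T_given_XY_cells _ t). unfold sumb; cbn beta.
    rewrite !checker_shift_same, !checker_shift_other. reflexivity. }
  unfold sumb. apply (is_derive_opp (V := R_NormedModule)).
  repeat apply (is_derive_plus (V := R_NormedModule)); apply cell_ent_derive; auto.
Qed.

Lemma derive_zero_at_local_max (f : R -> R) l :
  is_derive f 0 l -> locally 0 (fun s => f s <= f 0) -> l = 0.
Proof.
  intros Hd [eps Hmax]. apply is_derive_Reals in Hd.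
  pose proof (cond_pos eps) as Heps.
  apply (deriv_maximum f (- eps) eps 0 (exist _ l Hd)); try lra.
  intros s Hs1 Hs2. apply Hmax.
  change (Rabs (s - 0) < eps). rewrite Rminus_0_r. apply Rabs_def1; lra.
Qed.

(* The odds ratio [a d / (b c)] of the slice equals that of the (X,Y)-marginal. *)
Definition odds_balanced (a b c d e f g h : R) : Prop :=
  a * d * ((b + f) * (c + g)) = b * c * ((a + e) * (d + h)).

Lemma odds_balanced_of_ln a b c d e f g h :
  0 < a -> 0 < b -> 0 < c -> 0 < d -> 0 <= e -> 0 <= f -> 0 <= g -> 0 <= h ->
  ln (a / (a + e)) - ln (b / (b + f)) - ln (c / (c + g)) + ln (d / (d + h)) = 0 ->
  odds_balanced a b c d e f g h.
Proof.
  intros Ha Hb Hc Hd He Hf Hg Hh Hln.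
  assert (Hprod : a / (a + e) * (d / (d + h)) = b / (b + f) * (c / (c + g))).
  { apply ln_inv; try (apply Rmult_lt_0_compat; apply Rdiv_lt_0_compat; lra).
    rewrite !ln_mult by (apply Rdiv_lt_0_compat; lra). lra. }
  unfold odds_balanced.
  replace (a * d * ((b + f) * (c + g)))
    with (a / (a + e) * (d / (d + h)) * ((a + e) * (d + h) * ((b + f) * (c + g))))
    by (field; lra).
  rewrite Hprod. field. lra.
Qed.

Lemma local_max_odds_balanced (Q : jdist) t :
  (forall x y, 0 < Q t x y) -> (forall x y, 0 <= Q (negb t) x y) ->
  locally 0 (fun s => H_T_given_XY (checker_shift Q t false false s) <= H_T_given_XY Q) ->
  odds_balanced (Q t false false) (Q t false true) (Q t true false) (Q t true true)
    (Q (negb t) false false) (Q (negb t) false true) (Q (negb t) true false) (Q (negb t) true true).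
Proof.
  intros Hpos Hnn Hmax.
  assert (Hstat := derive_zero_at_local_max _ _ (H_checker_shift_derive Q t false false Hpos Hnn)).
  cbv beta in Hstat. rewrite checker_shift_0 in Hstat. specialize (Hstat Hmax).
  unfold sumb, sign_eqb in Hstat; simpl in Hstat.
  apply odds_balanced_of_ln; auto. lra.
Qed.

Lemma locally_checker_shift_pos (Q : jdist) t x0 y0 :
  (forall x y, 0 < Q t x y) ->
  locally 0 (fun s => forall x y, 0 < Q t x y + s * (sign_eqb x0 x * sign_eqb y0 y)).
Proof.
  intros Hpos.
  pose proof (fun x y => locally_pos_affine _ (sign_eqb x0 x * sign_eqb y0 y) (Hpos x y)) as Hloc.
  generalize (filter_and _ _ (filter_and _ _ (Hloc false false) (Hloc false true))
                             (filter_and _ _ (Hloc true false) (Hloc true true))).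
  apply filter_imp. intros s [[? ?] [? ?]] [] []; assumption.
Qed.

Lemma argmax_odds_balanced P Q t :
  is_argmax_HTXY P Q -> at_slice all_pos Q t ->
  odds_balanced (Q t false false) (Q t false true) (Q t true false) (Q t true true)
    (Q (negb t) false false) (Q (negb t) false true) (Q (negb t) true false) (Q (negb t) true true).
Proof.
  intros [HD Hmax] (H00 & H01 & H10 & H11).
  assert (Hpos : forall x y, 0 < Q t x y) by (intros [] []; assumption).
  apply local_max_odds_balanced; [exact Hpos | intros; apply HD |].
  apply filter_imp with (2 := locally_checker_shift_pos Q t false false Hpos).
  intros s Hs. apply Hmax, DeltaP_checker_shift; [exact HD |].
  intros x y. apply Rlt_le, Hs.
Qed.

Lemma plogp_0 : plogp 0 = 0.
Proof. unfold plogp. destruct (Rlt_dec 0 0); lra. Qed.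

Lemma plogp_1 : plogp 1 = 0.
Proof. unfold plogp. destruct (Rlt_dec 0 1); [rewrite ln_1; ring | lra]. Qed.

Lemma plogp_lt0 v : 0 < v < 1 -> plogp v < 0.
Proof.
  intros Hv. unfold plogp. destruct (Rlt_dec 0 v); [| lra].
  assert (ln v < 0) by (rewrite <- ln_1; apply ln_increasing; lra). nra.
Qed.

Lemma plogp_le0 v : 0 <= v <= 1 -> plogp v <= 0.
Proof.
  intros Hv.
  destruct (Req_dec v 0) as [-> | ]; [rewrite plogp_0; lra |].
  destruct (Req_dec v 1) as [-> | ]; [rewrite plogp_1; lra |].
  pose proof (plogp_lt0 v); lra.
Qed.

Lemma ent2_bool f : ent2 f = - (plogp (f false) + plogp (f true)).
Proof. reflexivity. Qed.

Section BinaryEntropy.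

Variable u : bool -> R.
Hypothesis u_ge0 : forall b, 0 <= u b.
Hypothesis sumb_u_gt0 : 0 < sumb u.

Lemma normalized_in_unit b : 0 <= u b / sumb u <= 1.
Proof.
  split; [apply Rdiv_le_0_compat; [apply u_ge0 | exact sumb_u_gt0] |].
  apply (Rdiv_le_1 _ _ sumb_u_gt0).
  pose proof (u_ge0 false); pose proof (u_ge0 true). unfold sumb. destruct b; lra.
Qed.

Lemma ent2_normalized_ge0 : 0 <= ent2 (fun b => u b / sumb u).
Proof.
  rewrite ent2_bool.
  pose proof (plogp_le0 _ (normalized_in_unit false)).
  pose proof (plogp_le0 _ (normalized_in_unit true)). lra.
Qed.

Lemma ent2_normalized_eq0 :
  ent2 (fun b => u b / sumb u) = 0 <-> u false = 0 \/ u true = 0.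
Proof.
  pose proof (u_ge0 false); pose proof (u_ge0 true).
  rewrite ent2_bool. split.
  - intros E.
    destruct (Req_dec (u false) 0); [now left |].
    destruct (Req_dec (u true) 0); [now right |].
    assert (Hfrac : forall b, 0 < u b / sumb u < 1).
    { intro b. split.
      - apply Rdiv_lt_0_compat; [destruct b; lra | exact sumb_u_gt0].
      - apply (Rdiv_lt_1 _ _ sumb_u_gt0). unfold sumb. destruct b; lra. }
    pose proof (plogp_lt0 _ (Hfrac false)); pose proof (plogp_lt0 _ (Hfrac true)). lra.
  - unfold sumb in *. intros [E | E]; rewrite E in *;
      rewrite ?Rplus_0_l, ?Rplus_0_r, Rdiv_0_l, Rdiv_diag by lra;
      rewrite plogp_0, plogp_1; ring.
Qed.

End BinaryEntropy.

Lemma H_X_given_Tt_DeltaP P Q t :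
  DeltaP P Q -> H_X_given_Tt P t = ent2 (fun x => pTX Q t x / sumb (pTX Q t)).
Proof.
  intros [_ [HX _]].
  assert (E : pTX P t = pTX Q t) by (extensionality x; symmetry; apply HX).
  unfold H_X_given_Tt. change (pT P t) with (sumb (pTX P t)). now rewrite E.
Qed.

Lemma H_Y_given_Tt_DeltaP P Q t :
  DeltaP P Q -> H_Y_given_Tt P t = ent2 (fun y => pTY Q t y / sumb (pTY Q t)).
Proof.
  intros [_ [_ HY]].
  assert (E : pTY P t = pTY Q t) by (extensionality y; symmetry; apply HY).
  unfold H_Y_given_Tt. replace (pT P t) with (sumb (pTY P t)) by (unfold pT, pTY, sumb; ring).
  now rewrite E.
Qed.

Lemma pTX_normalizable P Q t :
  DeltaP P Q -> 0 < pT P t -> (forall x, 0 <= pTX Q t x) /\ 0 < sumb (pTX Q t).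
Proof.
  intros [[Hnn _] [HX _]] HpT. split.
  - intro x. unfold pTX, sumb. pose proof (Hnn t x false); pose proof (Hnn t x true); lra.
  - change (pT P t) with (sumb (pTX P t)) in HpT. unfold sumb in *. now rewrite !HX.
Qed.

Lemma pTY_normalizable P Q t :
  DeltaP P Q -> 0 < pT P t -> (forall y, 0 <= pTY Q t y) /\ 0 < sumb (pTY Q t).
Proof.
  intros [[Hnn _] [_ HY]] HpT. split.
  - intro y. unfold pTY, sumb. pose proof (Hnn t false y); pose proof (Hnn t true y); lra.
  - replace (pT P t) with (sumb (pTY P t)) in HpT by (unfold pT, pTY, sumb; ring).
    unfold sumb in *. now rewrite !HY.
Qed.

Lemma H_X_given_Tt_ge0 P Q t : DeltaP P Q -> 0 < pT P t -> 0 <= H_X_given_Tt P t.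
Proof.
  intros HD HpT. destruct (pTX_normalizable P Q t HD HpT).
  rewrite (H_X_given_Tt_DeltaP P Q t HD). now apply ent2_normalized_ge0.
Qed.

Lemma H_Y_given_Tt_ge0 P Q t : DeltaP P Q -> 0 < pT P t -> 0 <= H_Y_given_Tt P t.
Proof.
  intros HD HpT. destruct (pTY_normalizable P Q t HD HpT).
  rewrite (H_Y_given_Tt_DeltaP P Q t HD). now apply ent2_normalized_ge0.
Qed.

Lemma H_X_given_Tt_eq0 P Q t :
  DeltaP P Q -> 0 < pT P t -> H_X_given_Tt P t = 0 <-> at_slice row_zero Q t.
Proof.
  intros HD HpT. destruct (pTX_normalizable P Q t HD HpT).
  rewrite (H_X_given_Tt_DeltaP P Q t HD), ent2_normalized_eq0 by assumption.
  assert (Hnn : forall x y, 0 <= Q t x y) by (intros; apply HD).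
  unfold at_slice, row_zero, pTX, sumb.
  pose proof (Hnn false false); pose proof (Hnn false true);
    pose proof (Hnn true false); pose proof (Hnn true true).
  split; intros [? | ?]; (left + right); lra.
Qed.

Lemma H_Y_given_Tt_eq0 P Q t :
  DeltaP P Q -> 0 < pT P t -> H_Y_given_Tt P t = 0 <-> at_slice col_zero Q t.
Proof.
  intros HD HpT. destruct (pTY_normalizable P Q t HD HpT).
  rewrite (H_Y_given_Tt_DeltaP P Q t HD), ent2_normalized_eq0 by assumption.
  assert (Hnn : forall x y, 0 <= Q t x y) by (intros; apply HD).
  unfold at_slice, col_zero, row_zero, pTY, sumb.
  pose proof (Hnn false false); pose proof (Hnn false true);
    pose proof (Hnn true false); pose proof (Hnn true true).
  split; intros [? | ?]; (left + right); lra.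
Qed.

Lemma sumb_weighted_eq0 (w h : bool -> R) :
  (forall b, 0 < w b) -> (forall b, 0 <= h b) ->
  sumb (fun b => w b * h b) = 0 <-> forall b, h b = 0.
Proof.
  intros Hw Hh. unfold sumb. split.
  - intros E. pose proof (Hw false); pose proof (Hw true);
    pose proof (Hh false); pose proof (Hh true).
    assert (0 <= w false * h false) by nra. assert (0 <= w true * h true) by nra.
    intros []; nra.
  - intros E. rewrite !E. ring.
Qed.

Lemma H_X_given_T_eq0 P Q :
  DeltaP P Q -> (forall t, 0 < pT P t) ->
  H_X_given_T P = 0 <-> forall t, at_slice row_zero Q t.
Proof.
  intros HD HpT. unfold H_X_given_T.
  rewrite (sumb_weighted_eq0 (pT P) (H_X_given_Tt P) HpT)
    by (intro t; exact (H_X_given_Tt_ge0 P Q t HD (HpT t))).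
  split; intros H t; apply (H_X_given_Tt_eq0 P Q t HD (HpT t)), H.
Qed.

Lemma H_Y_given_T_eq0 P Q :
  DeltaP P Q -> (forall t, 0 < pT P t) ->
  H_Y_given_T P = 0 <-> forall t, at_slice col_zero Q t.
Proof.
  intros HD HpT. unfold H_Y_given_T.
  rewrite (sumb_weighted_eq0 (pT P) (H_Y_given_Tt P) HpT)
    by (intro t; exact (H_Y_given_Tt_ge0 P Q t HD (HpT t))).
  split; intros H t; apply (H_Y_given_Tt_eq0 P Q t HD (HpT t)), H.
Qed.

Definition ci_rows (a b c d e f g h : R) : Prop := a * f = b * e /\ c * h = d * g.
Definition ci_cols (a b c d e f g h : R) : Prop := ci_rows a c b d e g f h.

Lemma ci_rows_swap a b c d e f g h : ci_rows e f g h a b c d -> ci_rows a b c d e f g h.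
Proof. unfold ci_rows. lra. Qed.

Lemma ci_cols_swap a b c d e f g h : ci_cols e f g h a b c d -> ci_cols a b c d e f g h.
Proof. apply ci_rows_swap. Qed.

Lemma odds_balanced_transpose a b c d e f g h :
  odds_balanced a b c d e f g h -> odds_balanced a c b d e g f h.
Proof. unfold odds_balanced. lra. Qed.

Lemma ci_of_all_pos a b c d e f g h :
  all_pos a b c d -> all_pos e f g h ->
  odds_balanced a b c d e f g h -> odds_balanced e f g h a b c d ->
  ci_rows a b c d e f g h \/ ci_cols a b c d e f g h.
Proof.
  unfold all_pos, odds_balanced, ci_cols, ci_rows.
  intros (Ha & Hb & Hc & Hd) (He & Hf & Hg & Hh) S0 S1.
  (* both slices have the odds ratio of the marginal, hence the same one *)
  assert (Hcross : a * d * f * g = b * c * e * h).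
  { apply Rmult_eq_reg_l with ((b + f) * (c + g)); [| nra].
    transitivity (f * g * (a * d * ((b + f) * (c + g)))); [ring |].
    rewrite S0. transitivity (b * c * (e * h * ((f + b) * (g + c)))); [| ring].
    rewrite S1. ring. }
  assert (E1 : a * b * (d * g - c * h) + c * d * (a * f - b * e) = 0).
  { transitivity ((a * d * ((b + f) * (c + g)) - b * c * ((a + e) * (d + h)))
                  - (a * d * f * g - b * c * e * h)); [ring |].
    rewrite S0, Hcross. ring. }
  assert (E2 : b * c * e * ((d * g - c * h) * (b * h - d * f)) = 0).
  { transitivity (d * f * g * (a * b * (d * g - c * h) + c * d * (a * f - b * e))
                  - (b * (d * g - c * h) + c * d * f) * (a * d * f * g - b * c * e * h));
      [ring |].
    rewrite E1, Hcross. ring. }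
  assert (Hbce : 0 < b * c * e) by (repeat apply Rmult_lt_0_compat; assumption).
  apply Rmult_integral in E2 as [E2 | E2]; [lra |].
  apply Rmult_integral in E2 as [E2 | E2].
  - left. split; [| lra].
    assert (Hcd : c * d * (a * f - b * e) = 0) by nra.
    assert (0 < c * d) by (apply Rmult_lt_0_compat; assumption).
    apply Rmult_integral in Hcd as [Hcd | Hcd]; lra.
  - right. split; [| lra].
    assert (0 < b * d * f) by (repeat apply Rmult_lt_0_compat; assumption).
    apply Rmult_eq_reg_l with (b * d * f); [| lra].
    transitivity (b * (a * d * f * g)); [ring |]. rewrite Hcross.
    transitivity (c * e * b * (b * h)); [ring |].
    replace (b * h) with (d * f) by lra. ring.
Qed.

Lemma ci_rows_of_all_pos_row_zero a b c d e f g h :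
  all_pos a b c d -> row_zero e f g h ->
  odds_balanced a b c d e f g h -> ci_rows a b c d e f g h.
Proof.
  unfold all_pos, row_zero, odds_balanced, ci_rows.
  intros (Ha & Hb & Hc & Hd) [[-> ->] | [-> ->]] S0; split; try ring.
  - apply Rmult_eq_reg_l with (a * b); nra.
  - apply Rmult_eq_reg_l with (c * d); nra.
Qed.

Lemma ci_cols_of_all_pos_col_zero a b c d e f g h :
  all_pos a b c d -> col_zero e f g h ->
  odds_balanced a b c d e f g h -> ci_cols a b c d e f g h.
Proof.
  intros (Ha & Hb & Hc & Hd) Hz S0.
  apply ci_rows_of_all_pos_row_zero; [repeat split; assumption | exact Hz |].
  now apply odds_balanced_transpose.
Qed.

Lemma ci_of_row_zero a b c d e f g h :
  row_zero a b c d -> row_zero e f g h ->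
  ci_rows a b c d e f g h \/ ci_cols a b c d e f g h.
Proof.
  unfold row_zero, ci_cols, ci_rows.
  intros [[-> ->] | [-> ->]] [[-> ->] | [-> ->]];
    first [left; split; ring | right; split; ring].
Qed.

Lemma ci_of_col_zero a b c d e f g h :
  col_zero a b c d -> col_zero e f g h ->
  ci_rows a b c d e f g h \/ ci_cols a b c d e f g h.
Proof. intros H0 H1. apply or_comm, ci_of_row_zero; assumption. Qed.

Lemma ci_of_slice_shapes a b c d e f g h :
  all_pos a b c d \/ row_zero a b c d \/ col_zero a b c d ->
  all_pos e f g h \/ row_zero e f g h \/ col_zero e f g h ->
  (all_pos a b c d -> odds_balanced a b c d e f g h) ->
  (all_pos e f g h -> odds_balanced e f g h a b c d) ->
  ((row_zero a b c d /\ col_zero e f g h) \/ (row_zero e f g h /\ col_zero a b c d) ->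
   (row_zero a b c d /\ row_zero e f g h) \/ (col_zero a b c d /\ col_zero e f g h)) ->
  ci_rows a b c d e f g h \/ ci_cols a b c d e f g h.
Proof.
  intros [P0 | [R0 | C0]] [P1 | [R1 | C1]] S0 S1 Hmix.
  - apply ci_of_all_pos; auto.
  - left. apply ci_rows_of_all_pos_row_zero; auto.
  - right. apply ci_cols_of_all_pos_col_zero; auto.
  - left. apply ci_rows_swap, ci_rows_of_all_pos_row_zero; auto.
  - apply ci_of_row_zero; assumption.
  - destruct Hmix as [[] | []]; auto using ci_of_row_zero, ci_of_col_zero.
  - right. apply ci_cols_swap, ci_cols_of_all_pos_col_zero; auto.
  - destruct Hmix as [[] | []]; auto using ci_of_row_zero, ci_of_col_zero.
  - apply ci_of_col_zero; assumption.
Qed.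

Lemma CI_T_Y_given_X_of_ci_rows (Q : jdist) :
  ci_rows (Q false false false) (Q false false true) (Q false true false) (Q false true true)
    (Q true false false) (Q true false true) (Q true true false) (Q true true true) ->
  CI_T_Y_given_X Q.
Proof.
  intros [E1 E2] t x y. unfold pX, pTX, pXY, sumb.
  destruct t, x, y; nra.
Qed.

Lemma CI_T_X_given_Y_of_ci_cols (Q : jdist) :
  ci_cols (Q false false false) (Q false false true) (Q false true false) (Q false true true)
    (Q true false false) (Q true false true) (Q true true false) (Q true true true) ->
  CI_T_X_given_Y Q.
Proof.
  intros [E1 E2] t x y. unfold pY, pTY, pXY, sumb.
  destruct t, x, y; nra.
Qed.

Theorem mainTheorem16 (P Qt : jdist) :
  is_dist P ->
  0 < pT P false -> 0 < pT P true ->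
  ( ((H_X_given_Tt P false = 0 /\ H_Y_given_Tt P true = 0) \/
     (H_X_given_Tt P true = 0 /\ H_Y_given_Tt P false = 0)) ->
    (H_X_given_T P = 0 \/ H_Y_given_T P = 0) ) ->
  is_argmax_HTXY P Qt ->
  rel_interior (DeltaP P) Qt ->
  CI_T_X_given_Y Qt \/ CI_T_Y_given_X Qt.
Proof.
  intros _ HpT0 HpT1 Hdet Hargmax Hri.
  assert (HD : DeltaP P Qt) by apply Hargmax.
  assert (HpT : forall t, 0 < pT P t) by (intros []; assumption).
  rewrite (H_X_given_Tt_eq0 P Qt false HD HpT0), (H_X_given_Tt_eq0 P Qt true HD HpT1),
    (H_Y_given_Tt_eq0 P Qt false HD HpT0), (H_Y_given_Tt_eq0 P Qt true HD HpT1),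
    (H_X_given_T_eq0 P Qt HD HpT), (H_Y_given_T_eq0 P Qt HD HpT) in Hdet.
  destruct (ci_of_slice_shapes _ _ _ _ _ _ _ _
              (rel_interior_slice_shape P Qt false Hri)
              (rel_interior_slice_shape P Qt true Hri)
              (argmax_odds_balanced P Qt false Hargmax)
              (argmax_odds_balanced P Qt true Hargmax))
    as [Hrows | Hcols].
  - intros Hmix. destruct (Hdet Hmix) as [Hall | Hall]; [left | right];
      exact (conj (Hall false) (Hall true)).
  - right. now apply CI_T_Y_given_X_of_ci_rows.
  - left. now apply CI_T_X_given_Y_of_ci_cols.
Qed.
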